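(* Let $\theta_+,\theta_-$ be anticommuting (Grassmann-odd) coordinates, let $\eta=\eta(x_+)$ be a fermionic (Grassmann-odd) function of $x_+$ and $\eta^\dagger=\eta^\dagger(x_-)$ its conjugate, a fermionic function of $x_-$, and set $T_1=\theta_+\eta$, $T_2=\theta_-\eta^\dagger$. Define the differential operator $$\mathcal{D}= iT_1\,\partial_+ + iT_2\,\partial_- - T_1T_2\,\partial_+\partial_- ,$$ where $\partial_\pm=\partial/\partial x_\pm$. Let $B(x_+,x_-)=(b_{jk})$ be an $M\times M$ matrix of bosonic (Grassmann-even) smooth functions of $(x_+,x_-)$, and let $(1+\mathcal{D})B$ denote the matrix with entries $(1+\mathcal{D})b_{jk}$. Then $$\det\big[(1+\mathcal{D})B(x_+,x_-)\big]=(1+\mathcal{D})\det\big[B(x_+,x_-)\big].$$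
   Context: Here $x_-$ is the complex conjugate variable of $x_+$. The quantities $T_1,T_2$ are products of two Grassmann-odd objects, hence Grassmann-even, commuting with everything, and satisfy $T_1^2=T_2^2=0$. *)

From HB Require Import structures.
From mathcomp Require Import all_boot all_order all_algebra all_field.
Set Implicit Arguments. Unset Strict Implicit. Unset Printing Implicit Defensive.
Import GRing.Theory Num.Theory.
Local Open Scope ring_scope.

(* F models the commutative algebra (over the complex numbers) of bosonic
   (Grassmann-even) smooth functions of (x_+, x_-), possibly with values in
   the even part of a Grassmann algebra.  dp, dm model the partial derivatives
   d/dx_+ and d/dx_- : derivations of F. *)

Definition is_derivation (F : comAlgType algC) (d : F -> F) : Prop :=
  (forall f g : F, d (f + g) = d f + d g) /\
  (forall f g : F, d (f * g) = d f * g + f * d g).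

Definition Dop (F : comAlgType algC) (dp dm : F -> F) (T1 T2 : F) (f : F) : F :=
  'i%:A * T1 * dp f + 'i%:A * T2 * dm f - T1 * T2 * dp (dm f).

Definition oneD (F : comAlgType algC) (dp dm : F -> F) (T1 T2 : F) (f : F) : F :=
  f + Dop dp dm T1 T2 f.

From HB Require Import structures.
From mathcomp Require Import all_boot all_order all_algebra all_field.
From mathcomp Require Import ring.
Import GRing.Theory Num.Theory.
Local Open Scope ring_scope.

(* With a := i T1 and b := i T2 one has -T1 T2 = a b, so 1 + D is the map
   f |-> f + a d_+ f + b d_- f + a b d_+ d_- f, i.e. the Taylor expansion of the
   shift f(x_+ + a, x_- + b), which is exact because a^2 = b^2 = 0.  Such a
   shift is a ring endomorphism, and determinants commute with ring morphisms. *)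

Section Derivation.
Context {R : comPzRingType} {d : R -> R}.
Hypotheses (dD : {morph d : x y / x + y})
  (dM : forall x y, d (x * y) = d x * y + x * d y).

Lemma der0 : d 0 = 0.
Proof. by apply: (@addrI _ (d 0)); rewrite -dD !addr0. Qed.

Lemma derN x : d (- x) = - d x.
Proof. by apply: (@addrI _ (d x)); rewrite -dD !subrr der0. Qed.

Lemma derB x y : d (x - y) = d x - d y.
Proof. by rewrite dD derN. Qed.

Lemma der1 : d 1 = 0.
Proof.
have d11 := dM 1 1; rewrite !mul1r mulr1 in d11.
by apply: (@addrI _ (d 1)); rewrite addr0 -d11.
Qed.

End Derivation.

Section SecondOrderShift.
Context {R : comPzRingType}.
Variables (d e : R -> R) (a b : R).
Hypotheses (dD : {morph d : x y / x + y})
  (dM : forall x y, d (x * y) = d x * y + x * d y)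
  (eD : {morph e : x y / x + y})
  (eM : forall x y, e (x * y) = e x * y + x * e y)
  (a2 : a ^+ 2 = 0) (b2 : b ^+ 2 = 0).

Definition shift2 (f : R) : R := f + a * d f + b * e f + a * b * d (e f).

Lemma shift2_is_zmod_morphism : zmod_morphism shift2.
Proof. by move=> f g; rewrite /shift2 !(derB eD) !(derB dD); ring. Qed.

Lemma shift2_is_monoid_morphism : monoid_morphism shift2.
Proof.
split; first by rewrite /shift2 (der1 eM) (der1 dM) (der0 dD) !mulr0 !addr0.
move=> f g; rewrite /shift2 eM dD !dM.
set fd := d f; set gd := d g; set fe := e f; set ge := e g.
set fde := d fe; set gde := d ge.
(* The two sides differ only by multiples of a^2 and b^2. *)
rewrite [RHS](_ : _ = f * g + a * (fd * g + f * gd) + b * (fe * g + f * ge)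
    + a * b * (fde * g + fe * gd + (fd * ge + f * gde))
    + a ^+ 2 * (fd * gd + b * fd * gde + b * fde * gd + b ^+ 2 * fde * gde)
    + b ^+ 2 * (fe * ge + a * fe * gde + a * fde * ge)); last by ring.
by rewrite a2 b2 !mul0r !addr0.
Qed.

HB.instance Definition _ :=
  GRing.isZmodMorphism.Build R R shift2 shift2_is_zmod_morphism.
HB.instance Definition _ :=
  GRing.isMonoidMorphism.Build R R shift2 shift2_is_monoid_morphism.

Lemma det_map_shift2 n (A : 'M[R]_n) : \det (map_mx shift2 A) = shift2 (\det A).
Proof. exact: det_map_mx. Qed.

End SecondOrderShift.

Lemma oneD_shift2 {F : comAlgType algC} (dp dm : F -> F) (T1 T2 : F) :
  oneD dp dm T1 T2 =1 shift2 dp dm ('i%:A * T1) ('i%:A * T2).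
Proof.
move=> f; have i2 : ('i%:A : F) * 'i%:A = -1.
  by rewrite mulr_algl scalerA -expr2 sqrCi scaleN1r.
rewrite /oneD /Dop /shift2 mulrACA i2 mulN1r; ring.
Qed.

Lemma sqr_mulr_eq0 {R : comPzRingType} (c : R) {x : R} :
  x ^+ 2 = 0 -> (c * x) ^+ 2 = 0.
Proof. by move=> x2; rewrite exprMn x2 mulr0. Qed.

Theorem lemma1 (F : comAlgType algC) (dp dm : F -> F) (T1 T2 : F)
  (hdp : is_derivation dp) (hdm : is_derivation dm)
  (hT1 : T1 ^+ 2 = 0) (hT2 : T2 ^+ 2 = 0)
  (M : nat) (B : 'M[F]_M) :
  \det (map_mx (oneD dp dm T1 T2) B) = oneD dp dm T1 T2 (\det B).
Proof.
have [dpD dpM] := hdp; have [dmD dmM] := hdm.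
rewrite (eq_map_mx _ (oneD_shift2 dp dm T1 T2)) oneD_shift2.
by apply: det_map_shift2; rewrite ?sqr_mulr_eq0.
Qed.
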